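(* Let $G=(V,E)$ be a graph with a partition $(V_1,V_2)$ of $V$ such that $G[V_1]$ and $G[V_2]$ are $P_5$-free, and let $k$ be an integer. Suppose that: $k\ge 1$; $G$ contains a $P_5$; every vertex of $G$ lies on some $P_5$ in $G$; every $P_5$ in $G$ contains at least $4$ vertices of $V_2$; and there is no vertex $v\in V_2$ that is isolated in $G[V_2]$ and for which there is a path $(v,w,x,y,z)$ in $G$ with $w\in V_1$. Let $e=\{u,v\}$ be an edge of $G[V_2]$ such that at least two vertices of $V_1$ are adjacent to $u$ or $v$, and each of $u$ and $v$ has at least one neighbour in $V_1$. Let $C_e$ be the connected component of $G[V_2]$ containing $e$. Then every vertex $w\in V_1$ adjacent to $u$ or $v$ satisfies $N(w)\subseteq V(C_e)$.
   Context: Graphs are finite, simple and undirected. A $P_5$ is a path on $5$ vertices (as a not necessarily induced subgraph), written as the sequence of its vertices; a graph is $P_5$-free if it contains no $P_5$. $G[X]$ denotes the subgraph induced by $X$; $N(w)$ is the set of neighbours of $w$ in $G$. *)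

From mathcomp Require Import all_boot.
Set Implicit Arguments. Unset Strict Implicit. Unset Printing Implicit Defensive.

Definition simple_graph (T : finType) (g : rel T) : Prop :=
  symmetric g /\ irreflexive g.

(* (a,b,c,d,f) is a P5 (not necessarily induced) in g: 5 distinct vertices,
   consecutive ones adjacent. *)
Definition is_P5 (T : finType) (g : rel T) (a b c d f : T) : bool :=
  [&& uniq [:: a; b; c; d; f], g a b, g b c, g c d & g d f].

(* G[X] is P5-free: no P5 of g all of whose vertices lie in X
   (edges of G[X] are exactly the edges of g between vertices of X). *)
Definition P5_free_in (T : finType) (g : rel T) (X : {set T}) : Prop :=
  forall a b c d f : T, is_P5 g a b c d f ->
    ~~ [&& a \in X, b \in X, c \in X, d \in X & f \in X].

Definition induced_rel (T : finType) (g : rel T) (X : {set T}) : rel T :=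
  [rel x y | [&& g x y, x \in X & y \in X]].

Definition component (T : finType) (g : rel T) (X : {set T}) (u : T) : {set T} :=
  [set x | connect (induced_rel g X) u x].

Definition isolated_in (T : finType) (g : rel T) (X : {set T}) (v : T) : Prop :=
  v \in X /\ forall x, x \in X -> ~~ g v x.

From mathcomp Require Import all_boot zify.
Set Implicit Arguments. Unset Strict Implicit. Unset Printing Implicit Defensive.

(* Because every P5 has at least four vertices in V2, no P5 contains two
   vertices of V1.  Every vertex lies on a P5, so every 4-cycle has an edge
   leaving it; appending that edge to the cycle gives a P5 through all four
   cycle vertices, hence no 4-cycle contains two vertices of V1 either.
   Now let w in V1 be adjacent to the endpoint p of e = pq and choose y in V1,
   y <> w, adjacent to q (the hypotheses on e provide one).  A neighbour x of w
   outside e would yield the P5 x w p q y or, if x = y, the 4-cycle y w p q,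
   each with two vertices of V1.  So N(w) is contained in e, hence in C_e. *)

Lemma count_disjoint (T : finType) (A B : {set T}) (s : seq T) :
  [disjoint A & B] ->
  count (fun x => x \in A) s + count (fun x => x \in B) s <= size s.
Proof.
move=> AB; rewrite -count_predUI (@eq_count _ (predI _ _) pred0).
  by rewrite count_pred0 addn0 count_size.
by move=> x /=; apply/negbTE/negP => /andP [xA]; rewrite (disjointFr AB xA).
Qed.

Lemma count_gt1 (T : eqType) (P : pred T) (s : seq T) x y :
  x != y -> x \in s -> y \in s -> P x -> P y -> 1 < count P s.
Proof.
move=> xy xs ys Px Py; rewrite -size_filter.
apply: (@uniq_leq_size _ [:: x; y]) => [|z]; first by rewrite /= inE xy.
by rewrite !inE mem_filter => /orP [] /eqP ->; apply/andP.
Qed.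

Lemma path_crossing_edge (T : eqType) (e : rel T) (P : pred T) x s :
  symmetric e -> path e x s -> has P (x :: s) -> ~~ all P (x :: s) ->
  exists y z, [/\ e y z, P y & ~~ P z].
Proof.
move=> esym; elim: s x => [|y s IHs] x /=; first by rewrite orbF andbT => _ ->.
case/andP=> exy pys; case Px: (P x); case Py: (P y) => /=.
- by move=> _ notall; apply: (IHs y pys); rewrite /= Py.
- by exists x, y; rewrite Px Py.
- by exists y, x; rewrite esym Px Py.
- by move=> hasPs _; apply: (IHs y pys); rewrite /= Py.
Qed.

Lemma other_attachment (T : finType) (g : rel T) (A : {set T}) u v w :
  symmetric g ->
  1 < #|[set y in A | g y u || g y v]| ->
  (exists y, (y \in A) && g u y) -> (exists y, (y \in A) && g v y) ->
  g w u || g w v ->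
  exists2 y, (y \in A) && (y != w) & (g w u && g v y) || (g w v && g u y).
Proof.
move=> g_sym two [yu /andP [yuA uyu]] [yv /andP [yvA vyv]].
case wu: (g w u); case wv: (g w v) => //= _.
- have [y] : exists y, y \in [set y in A | g y u || g y v] :\ w.
    by apply/set0Pn; rewrite -card_gt0; move: two; rewrite (cardsD1 w); lia.
  rewrite !inE => /and3P [yw yA] yuv; exists y; first by rewrite yA yw.
  by rewrite !(g_sym _ y) orbC.
- exists yv; last by rewrite vyv.
  by rewrite yvA /=; apply: contraTneq vyv => ->; rewrite g_sym wv.
- exists yu => //.
  by rewrite yuA /=; apply: contraTneq uyu => ->; rewrite g_sym wu.
Qed.

Section P5Partition.

Variables (T : finType) (g : rel T) (V1 V2 : {set T}).
Hypotheses (g_sym : symmetric g) (g_irr : irreflexive g).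
Hypothesis V1V2 : [disjoint V1 & V2].
Hypothesis P5_V2 : forall a b c d f, is_P5 g a b c d f ->
  4 <= count (fun x => x \in V2) [:: a; b; c; d; f].
Hypothesis P5_cover : forall x : T,
  exists a b c d f, is_P5 g a b c d f /\ x \in [:: a; b; c; d; f].

Lemma V1_neq_V2 x y : x \in V1 -> y \in V2 -> x != y.
Proof. by move=> xV1; apply: contraTneq => <-; rewrite (disjointFr V1V2 xV1). Qed.

Lemma P5_V1_unique a b c d f x y : is_P5 g a b c d f ->
  x \in [:: a; b; c; d; f] -> y \in [:: a; b; c; d; f] ->
  x \in V1 -> y \in V1 -> x = y.
Proof.
move=> abcdf xs ys xV1 yV1; apply/eqP; apply: contraTT (P5_V2 abcdf) => xy.
have := count_gt1 xy xs ys xV1 yV1; have := count_disjoint [:: a; b; c; d; f] V1V2.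
move: (count _ _) (count _ _) => n1 n2 /=; lia.
Qed.

Definition is_C4 a b c d := [&& uniq [:: a; b; c; d], g a b, g b c, g c d & g d a].

Lemma C4_rot a b c d : is_C4 a b c d -> is_C4 b c d a.
Proof. by rewrite /is_C4 -(rot_uniq 1) /= => /and5P [-> -> -> -> ->]. Qed.

Lemma C4_P5 a b c d z : is_C4 a b c d -> g d z -> z \notin [:: a; b; c; d] ->
  is_P5 g a b c d z.
Proof.
case/and5P=> abcd ab bc cd _ dz zC.
rewrite /is_P5 ab bc cd dz -[[:: a; b; c; d; z]]/(rcons [:: a; b; c; d] z).
by rewrite rcons_uniq zC abcd.
Qed.

Lemma exists_leaving_edge (s : seq T) x : x \in s -> size s < 5 ->
  exists t z, [/\ g t z, t \in s & z \notin s].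
Proof.
move=> xs small; have [a [b [c [d [f [P5 xP5]]]]]] := P5_cover x.
case/and5P: P5 => P5uniq ab bc cd df.
apply: (@path_crossing_edge _ g (mem s) a [:: b; c; d; f]) => //.
- by rewrite /= ab bc cd df.
- by apply/hasP; exists x.
- apply/negP => /allP /(uniq_leq_size P5uniq) /=.
  by apply/negP; rewrite -ltnNge.
Qed.

Lemma C4_V1_unique a b c d x y : is_C4 a b c d ->
  x \in [:: a; b; c; d] -> y \in [:: a; b; c; d] ->
  x \in V1 -> y \in V1 -> x = y.
Proof.
move=> C xC yC xV1 yV1.
have [t [z [tz tC zC]]] := exists_leaving_edge (mem_head a [:: b; c; d]) isT.
have ending_at_t a' b' c' d' : is_C4 a' b' c' d' ->
    [:: a'; b'; c'; d'] =i [:: a; b; c; d] -> d' = t -> x = y.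
  move=> C' eqC d't; rewrite -!eqC in xC yC zC; subst d'.
  have sub : {subset [:: a'; b'; c'; t] <= [:: a'; b'; c'; t; z]}.
    by move=> v; rewrite !inE => /or4P [] ->; rewrite ?orbT.
  exact: P5_V1_unique (C4_P5 C' tz zC) (sub _ xC) (sub _ yC) xV1 yV1.
move: tC; rewrite !inE => /or4P [] /eqP tE.
- exact: ending_at_t (C4_rot C) (mem_rot 1 [:: a; b; c; d]) (esym tE).
- exact: ending_at_t (C4_rot (C4_rot C)) (mem_rot 2 [:: a; b; c; d]) (esym tE).
- exact: ending_at_t (C4_rot (C4_rot (C4_rot C))) (mem_rot 3 [:: a; b; c; d]) (esym tE).
- exact: ending_at_t C (mem_rot 0 [:: a; b; c; d]) (esym tE).
Qed.

Lemma V1_neighbour_on_edge w y p q x : w \in V1 -> y \in V1 -> w != y ->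
  p \in V2 -> q \in V2 -> g p q -> g w p -> g q y -> g w x -> (x == p) || (x == q).
Proof.
move=> wV1 yV1 wy pV2 qV2 pq wp qy wx.
apply/contraT; rewrite negb_or => /andP [xp xq].
have adj_neq u v : g u v -> u != v by move=> uv; apply: contraTneq uv => ->; rewrite g_irr.
have [wp' wq'] := (V1_neq_V2 wV1 pV2, V1_neq_V2 wV1 qV2).
have [yp yq] := (V1_neq_V2 yV1 pV2, V1_neq_V2 yV1 qV2).
rewrite -(negbTE wy); apply/eqP; case: (eqVneq x y) => [xy | xy].
  subst x; apply: (@C4_V1_unique y w p q) => //; try by rewrite !inE eqxx //= ?orbT.
  by rewrite /is_C4 /= !inE !negb_or [y == w]eq_sym (adj_neq _ _ wx) (adj_neq _ _ pq)
    yp yq wp' wq' g_sym wx wp pq qy.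
apply: (@P5_V1_unique x w p q y) => //; try by rewrite !inE eqxx //= ?orbT.
by rewrite /is_P5 /= !inE !negb_or [x == w]eq_sym [p == y]eq_sym [q == y]eq_sym
  (adj_neq _ _ wx) (adj_neq _ _ pq) xp xq xy wp' wq' wy yp yq g_sym wx wp pq qy.
Qed.

End P5Partition.

Theorem lemma6 (T : finType) (g : rel T) (V1 V2 : {set T}) (k : nat) :
  simple_graph g ->
  (* (V1, V2) is a partition of V *)
  [disjoint V1 & V2] -> V1 :|: V2 = [set: T] ->
  P5_free_in g V1 -> P5_free_in g V2 ->
  1 <= k ->
  (exists a b c d f, is_P5 g a b c d f) ->
  (forall x : T, exists a b c d f, is_P5 g a b c d f /\ x \in [:: a; b; c; d; f]) ->
  (forall a b c d f, is_P5 g a b c d f ->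
     4 <= count (fun x => x \in V2) [:: a; b; c; d; f]) ->
  ~ (exists v w x y z, isolated_in g V2 v /\ is_P5 g v w x y z /\ w \in V1) ->
  forall u v : T, u \in V2 -> v \in V2 -> g u v ->
  2 <= #|[set w in V1 | g w u || g w v]| ->
  (exists w, (w \in V1) && g u w) -> (exists w, (w \in V1) && g v w) ->
  forall w, w \in V1 -> g w u || g w v ->
  forall x, g w x -> x \in component g V2 u.
Proof.
move=> [g_sym g_irr] V1V2 _ _ _ _ _ P5_cover P5_V2 _ u v uV2 vV2 uv two Nu Nv
  w wV1 wuv x wx.
have nbr := V1_neighbour_on_edge g_sym g_irr V1V2 P5_V2 P5_cover.
have [y /andP [yV1 yw] attach] := other_attachment g_sym two Nu Nv wuv.
rewrite eq_sym in yw.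
suff: (x == u) || (x == v).
  rewrite inE => /orP [] /eqP ->; first exact: connect0.
  by apply: connect1; apply/and3P.
case/orP: attach => /andP [wp qy].
  exact: nbr wV1 yV1 yw uV2 vV2 uv wp qy wx.
by rewrite orbC; apply: nbr wV1 yV1 yw vV2 uV2 _ wp qy wx; rewrite g_sym.
Qed.
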